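(* For every positive integer $n$, there exists a set $P$ of $n$ distinct points in the Euclidean plane $\mathbb{R}^2$ and $\lfloor n/4\rfloor$ distinct positive real numbers $d_1,\dots,d_{\lfloor n/4\rfloor}$ such that for each $j$, the number of unordered pairs $\{p,q\}\subset P$ with $p\neq q$ and $\|p-q\|=d_j$ is at least $n+1$.
   Context: A distance $d$ ''occurs $t$ times'' in a finite point set $P\subset\mathbb{R}^2$ if exactly $t$ unordered pairs of distinct points of $P$ are at Euclidean distance $d$. When $\lfloor n/4\rfloor=0$ the statement is vacuous. *)

From Stdlib Require Import Reals.
From mathcomp Require Import all_boot.
From mathcomp Require Import Rstruct.

Set Implicit Arguments.
Unset Strict Implicit.
Unset Printing Implicit Defensive.

Definition point := (R * R)%type.

Definition dist2 (p q : point) : R :=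
  sqrt (Rsqr (fst p - fst q)%R + Rsqr (snd p - snd q)%R)%R.

(* Number of unordered pairs {P i, P j} (i < j) at distance d, for a point
   family P : 'I_n -> point.  When P is injective these are exactly the
   unordered pairs of distinct points of the set {P i}. *)
Definition occ (n : nat) (P : 'I_n -> point) (d : R) : nat :=
  #|[set ij : 'I_n * 'I_n | (ij.1 < ij.2)%N && (dist2 (P ij.1) (P ij.2) == d)]|.

(* Let N = n/2 + 1 and h = PI/N.  Two regular N-gons are inscribed in the unit circles centred
   at (0, -cos h) and (0, cos h); they are mirror images in the x-axis and share the side
   from (-sin h, 0) to (sin h, 0), so together they have 2N - 2 vertices.  For odd n add the
   point (-3 sin h, 0), at distance 2 sin h (the side length) from (-sin h, 0).  For
   1 <= k <= n/4 < N/2, each polygon has N pairs of vertices k steps apart, all at the same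
   chord distance, and these pairs are distinct since 2k < N.  The two circles meet only in
   the shared vertices, so the only pair counted twice is the shared side (k = 1).  Hence the
   k-th chord occurs at least 2N >= n + 1 times for k >= 2, and 2N - 1 + (n mod 2) = n + 1
   times for k = 1. *)

From Stdlib Require Import Reals Lra.
From mathcomp Require Import all_boot.
From mathcomp Require Import Rstruct zify.

Set Implicit Arguments.
Unset Strict Implicit.
Unset Printing Implicit Defensive.

Definition flip (e : point * point) : point * point := (e.2, e.1).

Lemma flipK : involutive flip. Proof. by case. Qed.

Definition same_segment (e1 e2 : point * point) : Prop := e1 = e2 \/ e1 = flip e2.

Lemma same_segment_sym e1 e2 : same_segment e1 e2 -> same_segment e2 e1.
Proof. by case=> ->; [left | right; rewrite flipK]. Qed.

(* [dist2] is stated with MathComp's ring operations on [R], which unfold to Stdlib's. *)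
Lemma dist2E p q : dist2 p q = sqrt (Rsqr (p.1 - q.1) + Rsqr (p.2 - q.2)).
Proof. by []. Qed.

Lemma dist2_sym p q : dist2 p q = dist2 q p.
Proof. by rewrite !dist2E (Rsqr_neg_minus p.1) (Rsqr_neg_minus p.2). Qed.

Lemma dist2_xx p : dist2 p p = R0.
Proof. by rewrite dist2E !Rminus_diag Rsqr_0 Rplus_0_r sqrt_0. Qed.

Lemma segments_flip_uniq m (f : nat -> point * point) :
  (forall t, t < m -> (f t).1 <> (f t).2) ->
  (forall t1 t2, t1 < m -> t2 < m -> same_segment (f t1) (f t2) -> t1 = t2) ->
  uniq ([seq f t | t <- iota 0 m] ++ [seq flip (f t) | t <- iota 0 m]).
Proof.
move=> f_neq f_inj; have f_flip t : t < m -> f t <> flip (f t).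
  by move=> tm e; apply: (f_neq t tm); rewrite {1}e.
have f_inj_in (F : point * point -> point * point) : injective F ->
    {in iota 0 m &, injective (F \o f)}.
  move=> F_inj t1 t2; rewrite !mem_iota => /andP[_ t1m] /andP[_ t2m] /F_inj e.
  by apply: f_inj => //; left.
rewrite cat_uniq (map_inj_in_uniq (f_inj_in id _)) // (map_inj_in_uniq (f_inj_in flip _));
  last exact: can_inj flipK.
rewrite iota_uniq andbT /=.
apply/hasPn => x /mapP[t2]; rewrite mem_iota => /andP[_ t2m] ->.
apply/mapP => -[t1]; rewrite mem_iota => /andP[_ t1m] /esym e.
have t12 := f_inj t1 t2 t1m t2m (or_intror e).
by apply: (f_flip t1 t1m); rewrite {1}e t12.
Qed.

Lemma occ_ge_segments n (P : 'I_n -> point) d m (f : nat -> point * point) :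
  Rlt 0 d ->
  (forall t, t < m ->
     [/\ (f t).1 \in codom P, (f t).2 \in codom P & dist2 (f t).1 (f t).2 = d]) ->
  (forall t1 t2, t1 < m -> t2 < m -> same_segment (f t1) (f t2) -> t1 = t2) ->
  m <= occ P d.
Proof.
move=> d_gt0 f_ok f_inj.
pose S := [set ij : 'I_n * 'I_n | (ij.1 < ij.2) && (dist2 (P ij.1) (P ij.2) == d)].
pose seg (ij : 'I_n * 'I_n) := (P ij.1, P ij.2).
(* Each segment [f t] lies in [T] in both orientations, and these 2m oriented segments
   are distinct. *)
pose T := [seq seg ij | ij in S] ++ [seq flip (seg ij) | ij in S].
have f_neq t : t < m -> (f t).1 <> (f t).2.
  by move=> /f_ok [_ _ fd] e; move: fd; rewrite e dist2_xx => d0; lra.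
have f_in_T t : t < m -> (f t \in T) && (flip (f t) \in T).
  move=> tm; have [/codomP[i ei] /codomP[j ej] fd] := f_ok t tm.
  have fE : f t = (P i, P j) by rewrite -ei -ej; case: (f t).
  rewrite fE /T !mem_cat; case: (ltngtP i j) => ij.
  - have ijS : (i, j) \in S by rewrite inE ij /= -ei -ej fd eqxx.
    by rewrite (image_f seg ijS) (image_f (flip \o seg) ijS) orbT.
  - have jiS : (j, i) \in S by rewrite inE ij /= dist2_sym -ei -ej fd eqxx.
    by rewrite (image_f seg jiS) (image_f (flip \o seg) jiS) orbT.
  - by case: (f_neq t tm); rewrite ei ej (ord_inj ij).
have sub_T : {subset [seq f t | t <- iota 0 m] ++ [seq flip (f t) | t <- iota 0 m] <= T}.
  move=> x; rewrite mem_cat => /orP[] /mapP[t]; rewrite mem_iota => /andP[_ /f_in_T] /andP[].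
  - by move=> + _ ->.
  - by move=> _ + ->.
have := uniq_leq_size (segments_flip_uniq f_neq f_inj) sub_T.
rewrite size_cat !size_map size_iota /T size_cat !size_image -[#|S|]/(occ P d); lia.
Qed.

Local Open Scope R_scope.

Definition mirror (p : point) : point := (p.1, - p.2).

Lemma mirrorK : involutive mirror.
Proof. by case=> x y; rewrite /mirror Ropp_involutive. Qed.

Lemma dist2_mirror p q : dist2 (mirror p) (mirror q) = dist2 p q.
Proof. by rewrite !dist2E /=; congr (sqrt (_ + _)); rewrite /Rsqr; ring. Qed.

Definition on_unit_circle (c p : point) := Rsqr (p.1 - c.1) + Rsqr (p.2 - c.2) = 1.

Lemma on_unit_circle_mirror c p :
  on_unit_circle c p -> on_unit_circle (mirror c) (mirror p).
Proof. by rewrite /on_unit_circle /= => <-; congr (_ + _); rewrite /Rsqr; ring. Qed.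

Lemma unit_circles_meet c p : c <> 0 ->
  on_unit_circle (0, - c) p -> on_unit_circle (0, c) p -> p.2 = 0 /\ Rsqr p.1 + Rsqr c = 1.
Proof.
rewrite /on_unit_circle /= /Rsqr => c0 h1 h2.
have : (4 * c) * p.2 = 0 by lra.
case/Rmult_integral => [|p2]; first lra.
by rewrite p2 in h1 *; split; nra.
Qed.

Lemma cos_lt_1 x : 0 < x < 2 * PI -> cos x < 1.
Proof.
move=> [x0 x2PI]; have -> : x = 2 * (x / 2) by field.
rewrite cos_2a_sin; have : 0 < sin (x / 2) by apply: sin_gt_0; lra.
nra.
Qed.

Section Polygons.

Variable N : nat.
Hypothesis N_ge3 : (3 <= N)%N.

Definition half_step := PI / INR N.
Definition angle (m : nat) := (2 * INR m - 1) * half_step.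
Definition vtx_lo (m : nat) : point := (sin (angle m), cos (angle m) - cos half_step).
Definition vtx_hi (m : nat) : point := mirror (vtx_lo m).
Definition extra_pt : point := (-3 * sin half_step, 0).
Definition chord (k : nat) := sqrt (2 - 2 * cos (2 * INR k * half_step)).

Lemma INR_N_ge3 : 3 <= INR N.
Proof. have /le_INR : (3 <= N)%coq_nat by apply/leP. by rewrite /=; lra. Qed.

Lemma INR_N_half_step : INR N * half_step = PI.
Proof. have := INR_N_ge3; rewrite /half_step => N3; field; lra. Qed.

Lemma half_step_bounds : 0 < half_step < PI / 2.
Proof.
have := INR_N_half_step; have := INR_N_ge3; have := PI_RGT_0.
rewrite /half_step; split; [apply: Rdiv_lt_0_compat|]; nra.
Qed.

Lemma sin_half_step_gt0 : 0 < sin half_step.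
Proof. have := half_step_bounds; move=> [h0 h1]; apply: sin_gt_0; lra. Qed.

Lemma cos_half_step_gt0 : 0 < cos half_step.
Proof. have := half_step_bounds; move=> [h0 h1]; apply: cos_gt_0; lra. Qed.

Lemma dist_vtx_lo i j : dist2 (vtx_lo i) (vtx_lo j) = sqrt (2 - 2 * cos (angle i - angle j)).
Proof.
rewrite dist2E /= cos_minus; congr sqrt.
have := sin2_cos2 (angle i); have := sin2_cos2 (angle j); rewrite /Rsqr; nra.
Qed.

Lemma dist_vtx_lo_step m k : dist2 (vtx_lo m) (vtx_lo (m + k)) = chord k.
Proof.
rewrite dist_vtx_lo /chord -cos_neg /angle plus_INR; congr (sqrt (_ - _ * cos _)); ring.
Qed.

Lemma dist_vtx_hi_step m k : dist2 (vtx_hi m) (vtx_hi (m + k)) = chord k.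
Proof. by rewrite dist2_mirror dist_vtx_lo_step. Qed.

Lemma vtx_lo_addN m : vtx_lo (m + N) = vtx_lo m.
Proof.
have e : angle (m + N) = angle m + 2 * INR 1 * PI.
  by rewrite /angle plus_INR -INR_N_half_step /=; ring.
by rewrite /vtx_lo e sin_period cos_period.
Qed.

Lemma vtx_lo_neq i j : (i < j)%N -> (j < N)%N -> vtx_lo j <> vtx_lo i.
Proof.
move=> ij jN e.
have /lt_INR lt_ij : (i < j)%coq_nat by apply/ltP.
have /lt_INR lt_jN : (j < N)%coq_nat by apply/ltP.
have : cos (angle j - angle i) < 1.
  apply: cos_lt_1; rewrite /angle.
  by have := pos_INR i; have := INR_N_half_step; have := half_step_bounds; nra.
move=> cos_lt; have : 0 < sqrt (2 - 2 * cos (angle j - angle i)) by apply: sqrt_lt_R0; lra.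
by rewrite -dist_vtx_lo e dist2_xx; lra.
Qed.

Lemma vtx_lo_inj_lt i j : (i < N)%N -> (j < N)%N -> vtx_lo i = vtx_lo j -> i = j.
Proof.
move=> iN jN e; case: (ltngtP i j) => // ij; exfalso.
- exact: vtx_lo_neq ij jN (esym e).
- exact: vtx_lo_neq ij iN e.
Qed.

Lemma vtx_lo_eq i j : vtx_lo i = vtx_lo j -> (i < N.*2)%N -> (j < N.*2)%N ->
  (i = j \/ i = j + N \/ j = i + N)%N.
Proof.
have reduce g : (g < N.*2)%N ->
    exists2 r, (r < N)%N & vtx_lo g = vtx_lo r /\ (g = r \/ g = r + N)%N.
  case: (ltnP g N) => gN g2N; first by exists g => //; split; [|left].
  exists (g - N)%N; first lia.
  by rewrite -[vtx_lo (g - N)]vtx_lo_addN subnK //; split; [|right; lia].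
move=> e /reduce[r rN [ei er]] /reduce[s sN [ej es]].
have := vtx_lo_inj_lt rN sN; rewrite -ei -ej => /(_ e) rs.
lia.
Qed.

Lemma vtx_hi_eq i j : vtx_hi i = vtx_hi j -> (i < N.*2)%N -> (j < N.*2)%N ->
  (i = j \/ i = j + N \/ j = i + N)%N.
Proof. by move/(can_inj mirrorK); apply: vtx_lo_eq. Qed.

Lemma vtx_lo0 : vtx_lo 0 = (- sin half_step, 0).
Proof.
rewrite /vtx_lo; have -> : angle 0 = - half_step by rewrite /angle /=; ring.
by rewrite sin_neg cos_neg Rminus_diag.
Qed.

Lemma vtx_lo1 : vtx_lo 1 = (sin half_step, 0).
Proof.
rewrite /vtx_lo; have -> : angle 1 = half_step by rewrite /angle /=; ring.
by rewrite Rminus_diag.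
Qed.

Lemma vtx_hi0 : vtx_hi 0 = vtx_lo 0.
Proof. by rewrite /vtx_hi vtx_lo0 /mirror /= Ropp_0. Qed.

Lemma on_circle_vtx_lo m : on_unit_circle (0, - cos half_step) (vtx_lo m).
Proof.
rewrite /on_unit_circle /=; have := sin2_cos2 (angle m); rewrite /Rsqr; lra.
Qed.

Lemma on_circle_vtx_hi m : on_unit_circle (0, cos half_step) (vtx_hi m).
Proof.
by move: (on_unit_circle_mirror (on_circle_vtx_lo m)); rewrite {1}/mirror /= Ropp_involutive.
Qed.

Lemma vtx_hi1 : vtx_hi 1 = vtx_lo 1.
Proof. by rewrite /vtx_hi vtx_lo1 /mirror /= Ropp_0. Qed.

Lemma unit_circles_meet_vtx p :
  on_unit_circle (0, - cos half_step) p -> on_unit_circle (0, cos half_step) p ->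
  p = vtx_lo 0 \/ p = vtx_lo 1.
Proof.
move=> hlo hhi.
have [p2 p1] := unit_circles_meet (Rgt_not_eq _ _ cos_half_step_gt0) hlo hhi.
have /Rsqr_eq [p1s | p1s] : Rsqr p.1 = Rsqr (sin half_step).
  by have := sin2_cos2 half_step; lra.
- by right; rewrite vtx_lo1 -p1s -p2 -surjective_pairing.
- by left; rewrite vtx_lo0 -p1s -p2 -surjective_pairing.
Qed.

Lemma vtx_lo_hi_eq i j : vtx_lo i = vtx_hi j -> (i < N.*2)%N -> (j < N.*2)%N ->
  ((i = 0 \/ i = N) /\ (j = 0 \/ j = N) \/ (i = 1 \/ i = N.+1) /\ (j = 1 \/ j = N.+1))%N.
Proof.
move=> e i2N j2N.
have hi_i : on_unit_circle (0, cos half_step) (vtx_lo i).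
  by rewrite e; exact: on_circle_vtx_hi.
have [e0 | e1] := unit_circles_meet_vtx (on_circle_vtx_lo i) hi_i.
- have ej : vtx_hi j = vtx_hi 0 by rewrite -e e0 vtx_hi0.
  have := vtx_lo_eq e0; have := vtx_hi_eq ej; lia.
- have ej : vtx_hi j = vtx_hi 1 by rewrite -e e1 vtx_hi1.
  have := vtx_lo_eq e1; have := vtx_hi_eq ej; lia.
Qed.

Lemma extra_pt_neq_vtx_lo m : extra_pt <> vtx_lo m.
Proof.
move=> e; have := on_circle_vtx_lo m; rewrite -e /on_unit_circle /=.
have := sin2_cos2 half_step; have := sin_half_step_gt0; rewrite /Rsqr; nra.
Qed.

Lemma extra_pt_neq_vtx_hi m : extra_pt <> vtx_hi m.
Proof.
move=> e; apply: (extra_pt_neq_vtx_lo (m := m)).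
by rewrite -[vtx_lo m]mirrorK -/(vtx_hi m) -e /mirror /= Ropp_0.
Qed.

Lemma dist_extra_pt : dist2 extra_pt (vtx_lo 0) = chord 1.
Proof.
rewrite dist2E vtx_lo0 /chord /=; have -> : 2 * 1 * half_step = 2 * half_step by ring.
by rewrite cos_2a_sin; congr sqrt; rewrite /Rsqr; ring.
Qed.

Lemma chord_angle_bounds k : (k.*2 <= N)%N -> 0 <= 2 * INR k * half_step <= PI.
Proof.
move=> kN; have /le_INR : (k.*2 <= N)%coq_nat by apply/leP.
rewrite -addnn plus_INR; have := pos_INR k; have := INR_N_half_step; have := half_step_bounds.
nra.
Qed.

Lemma chord_gt0 k : (0 < k)%N -> (k.*2 <= N)%N -> 0 < chord k.
Proof.
move=> k0 kN; apply: sqrt_lt_R0.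
have /lt_INR /= k_gt0 : (0 < k)%coq_nat by apply/ltP.
have : cos (2 * INR k * half_step) < 1.
  apply: cos_lt_1; have := chord_angle_bounds kN; have := half_step_bounds.
  by have := PI_RGT_0; nra.
lra.
Qed.

Lemma chord_inj a b : (a.*2 <= N)%N -> (b.*2 <= N)%N -> chord a = chord b -> a = b.
Proof.
move=> aN bN ch.
have ca := COS_bound (2 * INR a * half_step); have cb := COS_bound (2 * INR b * half_step).
have : 2 * INR a * half_step = 2 * INR b * half_step.
  apply: cos_inj; [exact: chord_angle_bounds | exact: chord_angle_bounds |].
  by have := sqrt_inj _ _ _ _ ch; lra.
by move=> eab; apply: INR_eq; have := half_step_bounds; nra.
Qed.

End Polygons.

Local Close Scope R_scope.

Section Configuration.

Variable N : nat.
Hypothesis N_ge3 : 3 <= N.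

(* Indices below N: the lower polygon; N to 2N - 3: the upper vertices 2 to N - 1 (upper
   vertices 0 and 1 are lower vertices 0 and 1); 2N - 2: the extra point. *)
Definition pt (g : nat) : point :=
  if g < N then vtx_lo N g else if g < N.*2 - 2 then vtx_hi N (g + 2 - N) else extra_pt N.

Lemma pt_inj g1 g2 : pt g1 = pt g2 -> g1 < N.*2 - 1 -> g2 < N.*2 - 1 -> g1 = g2.
Proof.
wlog g12 : g1 g2 / g1 <= g2 => [hwlog e g1b g2b | ].
  by case: (leqP g1 g2) => [|/ltnW] g12; [|symmetry]; apply: hwlog.
move=> + g1b g2b.
rewrite /pt; case: ltnP => g1N; [|case: ltnP => g1B]; case: ltnP => g2N;
  try case: ltnP => g2B; try lia.
- by move/(vtx_lo_eq N_ge3); lia.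
- by move/(vtx_lo_hi_eq N_ge3); lia.
- by move/esym/(extra_pt_neq_vtx_lo N_ge3).
- by move/(vtx_hi_eq N_ge3); lia.
- by move/esym/(extra_pt_neq_vtx_hi N_ge3).
Qed.

Lemma vtx_lo_pt m : m < N.*2 -> exists2 g, g < N.*2 - 2 & vtx_lo N m = pt g.
Proof.
rewrite /pt; case: (ltnP m N) => mN m2N; first by exists m; rewrite ?mN //; lia.
exists (m - N); first lia.
by rewrite ifT ?ltn_subLR ?addnn // -[in LHS](subnK mN) vtx_lo_addN.
Qed.

Lemma vtx_hi_pt m : m < N.*2 -> exists2 g, g < N.*2 - 2 & vtx_hi N m = pt g.
Proof.
wlog mN : m / m < N => [hwlog m2N|_].
  case: (ltnP m N) => [mN|Nm]; first exact: hwlog.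
  have -> : vtx_hi N m = vtx_hi N (m - N) by rewrite /vtx_hi -{1}(subnK Nm) vtx_lo_addN.
  by apply: hwlog; lia.
rewrite /pt; case: (ltnP m 2) => m2.
  exists m; first lia.
  by rewrite ifT; [case: m m2 {mN} => [|[|]] //; rewrite ?vtx_hi0 ?vtx_hi1 | lia].
exists (m + N - 2); first lia.
by rewrite ifF ?ifT; [congr vtx_hi; lia | lia | lia].
Qed.

Lemma pt_extra : pt (N.*2 - 2) = extra_pt N.
Proof. by rewrite /pt ifF ?ifF //; lia. Qed.

(* The t-th pair of points at distance [chord N k]: the N lower pairs, then the upper pairs
   starting at vertices 1 to N - 1, then one more pair, which for k = 1 (when the upper pair
   starting at 0 is the shared side) involves the extra point. *)
Definition segment (k t : nat) : point * point :=
  if t < N then (vtx_lo N t, vtx_lo N (t + k))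
  else if t < N.*2 - 1 then (vtx_hi N (t + 1 - N), vtx_hi N (t + 1 - N + k))
  else if k == 1 then (extra_pt N, vtx_lo N 0) else (vtx_hi N 0, vtx_hi N k).

Lemma dist_segment k t : dist2 (segment k t).1 (segment k t).2 = chord N k.
Proof.
rewrite /segment; case: ifP => _; first exact: dist_vtx_lo_step.
case: ifP => _; first exact: dist_vtx_hi_step.
case: eqP => [->|_]; first exact: dist_extra_pt.
by rewrite -{2}[k]add0n dist_vtx_hi_step.
Qed.

Lemma segment_pt k e t : k < N -> e <= 1 -> t < N.*2 - 1 + e ->
  forall p, p = (segment k t).1 \/ p = (segment k t).2 ->
  exists2 g, g < N.*2 - 2 + e & p = pt g.
Proof.
move=> kN e1 tb p.
have lo m : m < N.*2 -> exists2 g, g < N.*2 - 2 + e & vtx_lo N m = pt g.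
  by move/vtx_lo_pt => [g gb ->]; exists g => //; lia.
have hi m : m < N.*2 -> exists2 g, g < N.*2 - 2 + e & vtx_hi N m = pt g.
  by move/vtx_hi_pt => [g gb ->]; exists g => //; lia.
rewrite /segment; case: ifP => t1; [|case: ifP => t2; [|case: eqP => k1]].
- by case=> ->; apply: lo; lia.
- by case=> ->; apply: hi; lia.
- case=> ->; last by apply: lo; lia.
  by exists (N.*2 - 2); [lia | rewrite pt_extra].
- by case=> ->; apply: hi; lia.
Qed.

Lemma polygon_segments_inj (X : nat -> point) k m1 m2 :
  (forall i j, X i = X j -> i < N.*2 -> j < N.*2 -> i = j \/ i = j + N \/ j = i + N) ->
  0 < k -> k.*2 < N -> m1 < N -> m2 < N ->
  same_segment (X m1, X (m1 + k)) (X m2, X (m2 + k)) -> m1 = m2.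
Proof. by move=> X_eq k0 kN m1N m2N [] /pair_equal_spec [/X_eq e1 /X_eq e2]; lia. Qed.

Lemma same_segment_lo_hi k m1 m2 : 0 < k -> k.*2 < N -> m1 < N -> m2 < N ->
  same_segment (vtx_lo N m1, vtx_lo N (m1 + k)) (vtx_hi N m2, vtx_hi N (m2 + k)) ->
  k = 1 /\ m2 = 0.
Proof.
move=> k0 kN m1N m2N [] /pair_equal_spec [/(vtx_lo_hi_eq N_ge3) e1 /(vtx_lo_hi_eq N_ge3) e2];
  lia.
Qed.

Lemma segment_inj k t1 t2 : 0 < k -> k.*2 < N -> t1 < N.*2 -> t2 < N.*2 ->
  same_segment (segment k t1) (segment k t2) -> t1 = t2.
Proof.
move=> k0 kN; wlog t12 : t1 t2 / t1 <= t2 => [hwlog t1b t2b e | t1b t2b].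
  case: (leqP t1 t2) => [t12 | /ltnW t21]; first exact: hwlog.
  by symmetry; apply: hwlog => //; apply: same_segment_sym.
have lo_inj := polygon_segments_inj (vtx_lo_eq N_ge3) k0 kN.
have hi_inj := polygon_segments_inj (vtx_hi_eq N_ge3) k0 kN.
rewrite /segment; case: ltnP => t1N; [|case: ltnP => t1B]; case: ltnP => t2N;
  try case: ltnP => t2B; try lia.
- exact: lo_inj.
- by move/same_segment_lo_hi; lia.
- case: eqP => k1.
    by case=> /pair_equal_spec [e1 e2]; [move: e1 | move: e2];
      move=> /esym/(extra_pt_neq_vtx_lo N_ge3).
  by rewrite -{2}[k]add0n => /same_segment_lo_hi; lia.
- by move/hi_inj; lia.
- case: eqP => k1.
    by case=> /pair_equal_spec [e1 e2]; [move: e1 | move: e2];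
      move=> /esym/(extra_pt_neq_vtx_hi N_ge3).
  by rewrite -{2}[k]add0n => /hi_inj; lia.
Qed.

End Configuration.

Theorem theorem1 :
  forall n : nat, (0 < n)%N ->
  exists (P : 'I_n -> point) (d : 'I_(n %/ 4) -> R),
    injective P /\ injective d /\
    (forall j, Rlt 0 (d j)) /\
    (forall j, (n.+1 <= occ P (d j))%N).
Proof.
move=> n n0; case: (ltnP n 4) => n4.
  have no_j (j : 'I_(n %/ 4)) : False by have := ltn_ord j; lia.
  exists (fun i => (INR i, R0)), (fun _ => R1).
  split; first by move=> i1 i2 [/INR_eq /val_inj].
  by split; [|split] => j; case: (no_j j).
pose N := n %/ 2 + 1; pose e := n %% 2.
have N3 : 3 <= N by lia.
have nE : n = N.*2 - 2 + e by lia.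
have kN (j : 'I_(n %/ 4)) : j.+1.*2 < N by have := ltn_ord j; lia.
pose P (i : 'I_n) := pt N i.
have pt_codom p : (exists2 g, g < N.*2 - 2 + e & p = pt N g) -> p \in codom P.
  by case=> g; rewrite -nE => gn ->; exact: (codom_f P (Ordinal gn)).
exists P, (fun j => chord N j.+1); split; [|split; [|split]].
- move=> i1 i2 /(pt_inj N3) e12; apply: val_inj.
  by apply: e12; have := ltn_ord i1; have := ltn_ord i2; lia.
- move=> j1 j2 e12; apply: val_inj.
  by case: (chord_inj N3 (ltnW (kN j1)) (ltnW (kN j2)) e12).
- by move=> j; apply: (chord_gt0 N3 (ltn0Sn j) (ltnW (kN j))).
move=> j; apply: (occ_ge_segments (f := segment N j.+1)) => [|t tn|t1 t2 t1n t2n].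
- exact: (chord_gt0 N3 (ltn0Sn j) (ltnW (kN j))).
- have ends p : p = (segment N j.+1 t).1 \/ p = (segment N j.+1 t).2 -> p \in codom P.
    by move=> hp; apply/pt_codom/(segment_pt N3 _ _ _ hp); have := kN j; lia.
  by split; [apply: ends; left | apply: ends; right | exact: dist_segment].
- by apply: (segment_inj N3 (ltn0Sn j) (kN j)); lia.
Qed.
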